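(* Assume $V$ is positive definite with smallest eigenvalue $\lambda$, and that $i_n$, $n\ge0$, are i.i.d. uniformly distributed on $\{1,\dots,d\}$. Then for every $j\ge0$, $$E(\|M_j\|^2)\le d^2\,(1-\lambda d^{-1})^j.$$
   Context: Let $d\ge1$ and let $V$ be a real symmetric $d\times d$ matrix whose diagonal entries all equal $1$. Write $\sqrt V$ for its symmetric positive semi-definite square root and $I$ for the $d\times d$ identity. Let $e_i$ be the $i$-th standard basis column vector of $\mathbb R^d$. For $1\le i\le d$ let $f_i=\sqrt V e_i$ and $P_i=I-f_if_i^T$. For $j\ge0$ let $M_j=P_{i_{j-1}}P_{i_{j-2}}\cdots P_{i_0}$, with $M_0=I$. For a $d\times d$ matrix $A$, $\|A\|=\sqrt{\operatorname{tr}(A^TVA)}$. *)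

From HB Require Import structures.
From mathcomp Require Import all_boot all_order all_algebra.
Set Implicit Arguments. Unset Strict Implicit. Unset Printing Implicit Defensive.
Import Order.TTheory GRing.Theory Num.Theory.
Local Open Scope ring_scope.

Section Defs.
Variables (R : rcfType) (d : nat).

Definition qform (A : 'M[R]_d) (x : 'cV[R]_d) : R := (x^T *m A *m x) 0 0.

Definition symmetric_mx (A : 'M[R]_d) : Prop := A^T = A.

Definition psd_mx (A : 'M[R]_d) : Prop :=
  symmetric_mx A /\ forall x : 'cV[R]_d, 0 <= qform A x.

Definition pd_mx (A : 'M[R]_d) : Prop :=
  symmetric_mx A /\ forall x : 'cV[R]_d, x != 0 -> 0 < qform A x.

Definition is_psd_sqrt (S V : 'M[R]_d) : Prop := psd_mx S /\ S *m S = V.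

Definition smallest_eigenvalue (V : 'M[R]_d) (lam : R) : Prop :=
  eigenvalue V lam /\ forall mu, eigenvalue V mu -> lam <= mu.

Definition e_vec (i : 'I_d) : 'cV[R]_d := delta_mx i 0.
Definition f_vec (S : 'M[R]_d) (i : 'I_d) : 'cV[R]_d := S *m e_vec i.
Definition P_mx (S : 'M[R]_d) (i : 'I_d) : 'M[R]_d :=
  1%:M - f_vec S i *m (f_vec S i)^T.

(* M_j = P_{i_{j-1}} ... P_{i_0}, for s = [:: i_0; ...; i_{j-1}] *)
Definition M_mx (S : 'M[R]_d) (s : seq 'I_d) : 'M[R]_d :=
  foldl (fun M i => P_mx S i *m M) 1%:M s.

Definition Vnorm (V A : 'M[R]_d) : R := Num.sqrt (\tr (A^T *m V *m A)).

(* E(||M_j||^2) for i_0, ..., i_{j-1} i.i.d. uniform on {1..d}: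
   uniform average over all j-tuples of indices *)
Definition expect_norm2 (S V : 'M[R]_d) (j : nat) : R :=
  (d%:R ^+ j)^-1 * \sum_(t : j.-tuple 'I_d) Vnorm V (M_mx S t) ^+ 2.

End Defs.

From mathcomp Require Import all_boot all_order all_algebra.
From mathcomp Require Import complex.
Import Order.TTheory GRing.Theory Num.Theory.
Local Open Scope ring_scope.
Set Implicit Arguments. Unset Strict Implicit. Unset Printing Implicit Defensive.

(* Since V_ii = 1, each f_i is a unit vector and P_i a symmetric idempotent.
   Writing ||A||^2 = tr(A^T V A), this gives
   ||A P_i||^2 = ||A||^2 - tr(A^T V A f_i f_i^T), and as \sum_i f_i f_i^T = S S = V,
   the average over i is ||A||^2 - tr(A^T V A V) / d <= (1 - lam/d) ||A||^2,
   by the Rayleigh bound lam tr(N N^T) <= tr(N V N^T) applied to N = S A.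
   The first index i_0 is the rightmost factor of M_j, so conditioning on it and
   iterating from ||I||^2 = tr V = d gives E ||M_j||^2 <= d (1 - lam/d)^j. *)

Lemma big_tuple_cons (R : Type) (idx : R) (op : Monoid.com_law idx)
    (T : finType) j (F : j.+1.-tuple T -> R) :
  \big[op/idx]_(t : j.+1.-tuple T) F t =
  \big[op/idx]_(i : T) \big[op/idx]_(t : j.-tuple T) F [tuple of i :: t].
Proof.
rewrite pair_big (reindex (fun p : T * j.-tuple T => [tuple of p.1 :: p.2])) //=.
apply: onW_bij; exists (fun t : j.+1.-tuple T => (thead t, [tuple of behead t])).
  by case=> i t /=; rewrite theadE; congr pair; apply: val_inj.
by move=> t; rewrite [in RHS](tuple_eta t).
Qed.

Lemma delta_mul_mx_delta (R : pzSemiRingType) n (A : 'M[R]_n) i :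
  delta_mx 0 i *m A *m delta_mx i 0 = (A i i)%:M :> 'M_1.
Proof. by apply/matrixP => a b; rewrite !ord1 -rowE -colE !mxE eqxx mulr1n. Qed.

Lemma mxtrace_mulmx_trmx (R : pzSemiRingType) m n (N : 'M[R]_(m, n)) (V : 'M[R]_n) :
  \tr (N *m V *m N^T) = \sum_k (row k N *m V *m (row k N)^T) 0 0.
Proof.
by apply: eq_bigr => k _; rewrite -row_mul tr_row colE mulmxA -colE -row_mul !mxE.
Qed.

Lemma mxtrace_mulmx_trmx_ge0 (R : realDomainType) m n (N : 'M[R]_(m, n)) :
  0 <= \tr (N *m N^T).
Proof.
apply: sumr_ge0 => k _; rewrite mxE; apply: sumr_ge0 => l _.
by rewrite mxE -expr2 sqr_ge0.
Qed.

Definition rayleigh_lbound (R : numDomainType) n (V : 'M[R]_n) (lam : R) :=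
  forall x : 'rV[R]_n, lam * (x *m x^T) 0 0 <= (x *m V *m x^T) 0 0.

Section Rayleigh.
Variables (R : numDomainType) (n : nat) (V : 'M[R]_n) (lam : R).
Hypothesis Vlam : rayleigh_lbound V lam.

Lemma rayleigh_lbound_diag i : lam <= V i i.
Proof.
have := Vlam (delta_mx 0 i); rewrite trmx_delta delta_mul_mx_delta mul_delta_mx.
by rewrite !mxE !eqxx mulr1n mulr1.
Qed.

Lemma mxtrace_rayleigh m (N : 'M[R]_(m, n)) :
  lam * \tr (N *m N^T) <= \tr (N *m V *m N^T).
Proof.
have -> : N *m N^T = N *m 1%:M *m N^T by rewrite mulmx1.
rewrite !mxtrace_mulmx_trmx mulr_sumr; apply: ler_sum => k _.
by rewrite mulmx1; apply: Vlam.
Qed.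
End Rayleigh.

Section UnitaryDiagonalization.
Local Open Scope sesquilinear_scope.
Variables (C : numClosedFieldType) (n : nat) (A P : 'M[C]_n) (D : 'rV[C]_n).
Hypotheses (P_unitary : P \is unitarymx) (A_diag : A = P^t* *m diag_mx D *m P).

Lemma unitary_diag_eigenvalue k : eigenvalue A (D 0 k).
Proof.
apply/eigenvalueP; exists (row k P).
  by rewrite -row_mul A_diag !mulmxA (unitarymxP P_unitary) mul1mx
    row_mul row_diag_mx -scalemxAl -rowE.
apply/eqP => Pk0; have /row_unitarymxP/(_ k k) := P_unitary.
by rewrite Pk0 dotmxE mul0mx mxE eqxx => /eqP; rewrite eq_sym oner_eq0.
Qed.

Lemma unitary_diag_rayleigh a : (forall k, a <= D 0 k) ->
  forall x : 'rV_n, a * (x *m x^t*) 0 0 <= (x *m A *m x^t*) 0 0.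
Proof.
move=> aD x; set y := x *m P^t*.
have y_adj : y^t* = P *m x^t* by rewrite /y trmx_mul map_mxM trmxCK.
have -> : x *m x^t* = y *m y^t* by rewrite y_adj mulmxA mulmxKtV.
rewrite A_diag !mulmxA -/y -mulmxA -y_adj !mxE mulr_sumr.
apply: ler_sum => k _; rewrite mul_mx_diag !mxE mulrAC [_ * D 0 k]mulrC.
by apply: ler_wpM2r; [exact: mul_conjC_ge0 | exact: aD].
Qed.

End UnitaryDiagonalization.

Section RealSymmetric.
Local Open Scope sesquilinear_scope.
Variables (R : rcfType) (n : nat).
Local Notation toC := (real_complex R).

Lemma map_mx_toC_real m p (M : 'M[R]_(m, p)) : M ^ toC \is a realmx.
Proof. by apply/mxOverP => i j; apply/complex_realP; exists (M i j); rewrite mxE. Qed.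

Lemma symmetric_rayleigh (V : 'M[R]_n) lam :
  V^T = V -> (forall mu, eigenvalue V mu -> lam <= mu) -> rayleigh_lbound V lam.
Proof.
(* The spectral theorem is stated for hermitian matrices over a closed field. *)
move=> V_sym lam_min x; set Vc := V ^ toC.
have Vc_herm : Vc \is hermsymmx.
  apply: realsym_hermsym; last exact: map_mx_toC_real.
  by apply/is_hermitianmxP; rewrite expr0 scale1r map_mx_id // /Vc map_trmx V_sym.
have Vc_diag : Vc = (spectralmx Vc)^t* *m diag_mx (spectral_diag Vc) *m spectralmx Vc.
  have /hermitian_normalmx/orthomx_spectralP := Vc_herm.
  by rewrite invmx_unitary ?spectral_unitarymx.
have lam_D k : toC lam <= spectral_diag Vc 0 k.
  have /mxOverP/(_ 0 k)/complex_realP[mu Dk] := hermitian_spectral_diag_real Vc_herm.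
  rewrite Dk lecR; apply: lam_min.
  have := unitary_diag_eigenvalue (spectral_unitarymx Vc) Vc_diag k.
  by rewrite Dk eigenvalue_map.
have := unitary_diag_rayleigh (spectral_unitarymx Vc) Vc_diag lam_D (map_mx toC x).
rewrite realmxC; last by rewrite map_trmx map_mx_toC_real.
by rewrite map_trmx -!map_mxM !mxE -rmorphM lecR.
Qed.
End RealSymmetric.

Definition Vnorm2 (R : rcfType) n (V A : 'M[R]_n) : R := \tr (A^T *m V *m A).

Section Projections.
Variables (R : rcfType) (d : nat) (S V : 'M[R]_d).
Hypotheses (S_sym : S^T = S) (S_sqrt : S *m S = V) (V_diag : forall i, V i i = 1).
Implicit Types (A : 'M[R]_d) (s : seq 'I_d).

Lemma mulmx_V_sqrtE A : A^T *m V *m A = (S *m A)^T *m (S *m A).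
Proof. by rewrite trmx_mul S_sym -S_sqrt !mulmxA. Qed.

Lemma Vnorm2_ge0 A : 0 <= Vnorm2 V A.
Proof. by rewrite /Vnorm2 mulmx_V_sqrtE mxtrace_mulC mxtrace_mulmx_trmx_ge0. Qed.

Lemma Vnorm_sqr A : Vnorm V A ^+ 2 = Vnorm2 V A.
Proof. by rewrite sqr_sqrtr // Vnorm2_ge0. Qed.

Lemma Vnorm2_1 : Vnorm2 V 1%:M = d%:R.
Proof.
rewrite /Vnorm2 trmx1 mul1mx mulmx1 /mxtrace (eq_bigr _ (fun i _ => V_diag i)).
by rewrite sumr_const card_ord.
Qed.

Lemma f_vec_unit i : (f_vec S i)^T *m f_vec S i = 1%:M.
Proof.
rewrite /f_vec /e_vec trmx_mul S_sym trmx_delta mulmxA -(mulmxA _ S S) S_sqrt.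
by rewrite delta_mul_mx_delta V_diag.
Qed.

Lemma sum_f_vec_outer : \sum_i f_vec S i *m (f_vec S i)^T = V.
Proof.
rewrite -S_sqrt -[S in S *m _]mulmx1 mx1_sum_delta mulmx_sumr mulmx_suml.
apply: eq_bigr => i _; rewrite /f_vec /e_vec trmx_mul S_sym trmx_delta.
by rewrite mulmxA -(mulmxA S) mul_delta_mx.
Qed.

Lemma P_mx_sym i : (P_mx S i)^T = P_mx S i.
Proof. by rewrite /P_mx raddfB /= trmx1 trmx_mul trmxK. Qed.

Lemma P_mx_idem i : P_mx S i *m P_mx S i = P_mx S i.
Proof.
rewrite /P_mx mulmxBl mulmxBr !mul1mx mulmxBr mulmx1.
by rewrite mulmxA -(mulmxA _ _ (f_vec S i)) f_vec_unit mulmx1 subrr subr0.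
Qed.

Lemma Vnorm2_mul_P A i :
  Vnorm2 V (A *m P_mx S i) =
  Vnorm2 V A - \tr (A^T *m V *m A *m (f_vec S i *m (f_vec S i)^T)).
Proof.
rewrite /Vnorm2 trmx_mul P_mx_sym -!mulmxA mxtrace_mulC -!mulmxA P_mx_idem.
by rewrite /P_mx !mulmxBr mulmx1 raddfB /= !mulmxA.
Qed.

Lemma sum_Vnorm2_mul_P lam A : rayleigh_lbound V lam ->
  \sum_i Vnorm2 V (A *m P_mx S i) <= (d%:R - lam) * Vnorm2 V A.
Proof.
move=> Vlam; rewrite (eq_bigr _ (fun i _ => Vnorm2_mul_P A i)) sumrB.
have -> : \sum_i \tr (A^T *m V *m A *m (f_vec S i *m (f_vec S i)^T)) =
          \tr (A^T *m V *m A *m V).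
  by rewrite -raddf_sum -mulmx_sumr sum_f_vec_outer.
rewrite sumr_const card_ord mulrBl mulr_natl lerD2l lerN2 /Vnorm2 mulmx_V_sqrtE.
rewrite -mulmxA [X in _ <= X]mxtrace_mulC [X in _ * X]mxtrace_mulC.
exact: mxtrace_rayleigh.
Qed.

Lemma M_mx_foldl A s : foldl (fun M i => P_mx S i *m M) A s = M_mx S s *m A.
Proof.
elim: s A => [|i s IH] A /=; first by rewrite /M_mx /= mul1mx.
by rewrite /M_mx /= IH (IH (P_mx S i *m 1%:M)) mulmx1 mulmxA.
Qed.

Lemma M_mx_cons i s : M_mx S (i :: s) = M_mx S s *m P_mx S i.
Proof. by rewrite {1}/M_mx /= M_mx_foldl mulmx1. Qed.

Lemma sum_Vnorm2_M_mx lam : rayleigh_lbound V lam -> lam <= d%:R ->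
  forall j, \sum_(t : j.-tuple 'I_d) Vnorm2 V (M_mx S t) <= d%:R * (d%:R - lam) ^+ j.
Proof.
move=> Vlam lam_le_d; elim=> [|j IH].
  rewrite (eq_bigr (fun=> d%:R)) => [|t _]; last by rewrite tuple0 /M_mx /= Vnorm2_1.
  by rewrite sumr_const card_tuple card_ord expn0 expr0 mulr1.
apply: le_trans (_ : (d%:R - lam) * \sum_(t : j.-tuple 'I_d) Vnorm2 V (M_mx S t) <= _).
  rewrite big_tuple_cons exchange_big mulr_sumr; apply: ler_sum => t _.
  under eq_bigr do rewrite M_mx_cons.
  exact: sum_Vnorm2_mul_P.
by rewrite exprS mulrCA ler_wpM2l // subr_ge0.
Qed.

End Projections.

Theorem lemma5p1 (R : rcfType) (d : nat) (V S : 'M[R]_d) (lam : R) :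
  (0 < d)%N ->
  symmetric_mx V ->
  (forall i : 'I_d, V i i = 1) ->
  is_psd_sqrt S V ->
  pd_mx V ->
  smallest_eigenvalue V lam ->
  forall j : nat,
    expect_norm2 S V j <= d%:R ^+ 2 * (1 - lam / d%:R) ^+ j.
Proof.
move=> d_gt0 V_sym V_diag [[S_sym _] S_sqrt] _ [_ lam_min] j.
have Vlam := symmetric_rayleigh V_sym lam_min.
have lam_le_d : lam <= d%:R.
  have := rayleigh_lbound_diag Vlam (Ordinal d_gt0); rewrite V_diag => lam_le1.
  by apply: le_trans lam_le1 _; rewrite ler1n.
have d_gt0R : 0 < d%:R :> R by rewrite ltr0n.
rewrite /expect_norm2; under eq_bigr do rewrite (Vnorm_sqr S_sym S_sqrt).
apply: le_trans (ler_wpM2l _ (sum_Vnorm2_M_mx S_sym S_sqrt V_diag Vlam lam_le_d j)) _.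
  by rewrite invr_ge0 exprn_ge0 // ltW.
have -> : (d%:R ^+ j)^-1 * (d%:R * (d%:R - lam) ^+ j) = d%:R * (1 - lam / d%:R) ^+ j.
  by rewrite mulrCA [_^-1 * _]mulrC -expr_div_n mulrBl divff ?gt_eqF.
rewrite ler_wpM2r ?exprn_ge0 ?subr_ge0 ?ler_pdivrMr ?mul1r //.
by rewrite expr2 ler_peMl // ?ler1n // ltW.
Qed.
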